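(* Let $S=\{z\in\mathbb C:0<\operatorname{Im} z<1\}$. For every $M\ge1$ there is $K(M)\ge1$, with $\lim_{M\to1}K(M)=1$, such that the following holds: if $f_0,f_1\colon\mathbb R\to\mathbb R$ are diffeomorphisms with $1/M\le f_k'(x)\le M$ for $k=0,1$ and $|f_0(x)-f_1(x)|\le M-1$ for all $x\in\mathbb R$, then there exists a $K(M)$-quasiconformal map $f\colon S\to S$ whose boundary values satisfy $f(x+ik)=f_k(x)+ik$ for $k=0,1$ and all $x\in\mathbb R$. *)

(* The complex plane C is modelled as R * R
   (x + i y  <->  (x, y)), with the Euclidean distance. *)
From HB Require Import structures.
From mathcomp Require Import all_boot all_order all_algebra.
From mathcomp Require Import all_classical all_reals all_analysis.
Set Implicit Arguments. Unset Strict Implicit. Unset Printing Implicit Defensive.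
Import Order.TTheory GRing.Theory Num.Theory.
Import numFieldNormedType.Exports.
Local Open Scope classical_set_scope.
Local Open Scope ring_scope.

Section Defs.
Variable R : realType.

Definition dist2 (p q : R * R) : R :=
  Num.sqrt ((p.1 - q.1) ^+ 2 + (p.2 - q.2) ^+ 2).

Definition strip : set (R * R) := [set p | 0 < p.2 < 1].
Definition cstrip : set (R * R) := [set p | 0 <= p.2 <= 1].

(* For all small radii r, the ratio
     L_F(z,r) / l_F(z,r) = (max_{|w-z|=r} |F w - F z|) / (min_{|w-z|=r} |F w - F z|)
   is at most c (written without sup/inf, i.e. unfolded). *)
Definition ratio_eventually_le (F : R * R -> R * R) (z : R * R) (c : R) : Prop :=
  exists2 d : R, 0 < d & forall r : R, 0 < r < d ->
    forall w1 w2 : R * R, dist2 w1 z = r -> dist2 w2 z = r ->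
      dist2 (F w1) (F z) <= c * dist2 (F w2) (F z).

(* metric dilatation H_F(z) := limsup_{r->0+} L_F(z,r)/l_F(z,r) *)
Definition metric_dil_le (F : R * R -> R * R) (z : R * R) (K : R) : Prop :=
  forall e : R, 0 < e -> ratio_eventually_le F z (K + e).
Definition metric_dil_finite (F : R * R -> R * R) (z : R * R) : Prop :=
  exists c : R, ratio_eventually_le F z c.

Definition homeo_strip (F : R * R -> R * R) : Prop :=
  [/\ (forall z, strip z -> strip (F z)),
      {within strip, continuous F} &
      exists G : R * R -> R * R,
        [/\ (forall z, strip z -> strip (G z)),
            {within strip, continuous G},
            (forall z, strip z -> G (F z) = z) &
            (forall z, strip z -> F (G z) = z)]].

Definition leb2 := ((@lebesgue_measure R) \x (@lebesgue_measure R))%E.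

(* K-quasiconformal map S -> S (Gehring's metric definition):
   a homeomorphism of S with H_F finite everywhere in S and H_F <= K a.e. in S *)
Definition qc_strip (K : R) (F : R * R -> R * R) : Prop :=
  [/\ homeo_strip F,
      (forall z, strip z -> metric_dil_finite F z) &
      {ae leb2, forall z, strip z -> metric_dil_le F z K}].

Definition diffeo (f : R -> R) : Prop :=
  [/\ bijective f, (forall x, derivable f x 1) & continuous (derive1 f)].

End Defs.

From HB Require Import structures.
From mathcomp Require Import all_boot all_order all_algebra.
From mathcomp Require Import all_classical all_reals all_analysis.
From mathcomp Require Import ring lra.
Set Implicit Arguments. Unset Strict Implicit. Unset Printing Implicit Defensive.
Import Order.TTheory GRing.Theory Num.Theory.
Import numFieldNormedType.Exports.
Local Open Scope classical_set_scope.
Local Open Scope ring_scope.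

(* Interpolate linearly between the boundary maps: F (x, y) = ((1 - y) f0 x + y f1 x, y).
   By the mean value theorem, F w - F z is the image of w - z under a shear
   [[s, b], [0, 1]] with s in [1/M, M] (a convex combination of derivatives of
   f0 and f1) and |b| = |f1 - f0| <= M - 1.  Such a shear distorts lengths by at
   most M^2 in either direction, so F is bi-Lipschitz on the closed strip and its
   metric dilatation is at most K(M) = M^4 everywhere, which tends to 1 as M -> 1. *)

Section RealDomainFacts.
Context {R : realDomainType}.

Lemma mul2_le_sqr_sum (b c u v : R) :
  `|b| <= c -> 2 * b * u * v <= c * (u ^+ 2 + v ^+ 2).
Proof.
rewrite ler_norml => /andP[cb bc].
have cb0 : 0 <= c + b by lra.
have bc0 : 0 <= c - b by lra.
have := mulr_ge0 bc0 (sqr_ge0 (u + v)).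
have := mulr_ge0 cb0 (sqr_ge0 (u - v)).
nra.
Qed.

Lemma sqr_le_of_norm_le (b c : R) : `|b| <= c -> b ^+ 2 <= c ^+ 2.
Proof. by rewrite -real_normK ?num_real //; have := normr_ge0 b; nra. Qed.

Lemma convex_comb_itv (lo hi a b y : R) :
  0 <= y <= 1 -> lo <= a <= hi -> lo <= b <= hi -> lo <= (1 - y) * a + y * b <= hi.
Proof. by move=> /andP[? ?] /andP[? ?] /andP[? ?]; apply/andP; split; nra. Qed.

Definition clamp01 (y : R) : R := if y < 0 then 0 else if 1 < y then 1 else y.

Lemma clamp01_itv (y : R) : 0 <= clamp01 y <= 1.
Proof.
by rewrite /clamp01; case: (ltP y 0) => ?; case: (ltP 1 y) => ?; apply/andP; split; lra.
Qed.

Lemma clamp01_id (y : R) : 0 <= y <= 1 -> clamp01 y = y.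
Proof.
by move=> /andP[? ?]; rewrite /clamp01; case: (ltP y 0) => ?; case: (ltP 1 y) => ?; lra.
Qed.

Lemma clamp01_dist_le (a b : R) : `|clamp01 a - clamp01 b| <= `|a - b|.
Proof.
have := ler_norm (a - b); have : b - a <= `|a - b| by rewrite distrC ler_norm.
rewrite /clamp01 ler_norml; case: (ltP a 0); case: (ltP 1 a);
  case: (ltP b 0); case: (ltP 1 b) => *; apply/andP; split; lra.
Qed.

End RealDomainFacts.

Section RealFieldFacts.
Context {R : realFieldType}.

Lemma invf_le_mul_ge1 (M a : R) : 0 < M -> (M^-1 <= a) = (1 <= a * M).
Proof. by move=> M_gt0; rewrite -div1r ler_pdivrMr. Qed.

Lemma shear_sqr_norm_le (M a b u v : R) :
  1 <= M -> M^-1 <= a <= M -> `|b| <= M - 1 ->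
  (a * u + b * v) ^+ 2 + v ^+ 2 <= M ^+ 4 * (u ^+ 2 + v ^+ 2).
Proof.
move=> M_ge1 /andP[+ a_le] b_le; rewrite invf_le_mul_ge1 ?(lt_le_trans ltr01) // => aM_ge1.
have M_ge0 : 0 <= M by lra.
have M1_ge0 : 0 <= M - 1 by lra.
have a_ge0 : 0 <= a by nra.
have coef_u : M ^+ 2 + M * (M - 1) <= M ^+ 4.
  have : 0 <= M ^+ 2 + M - 1 by nra.
  by move/(mulr_ge0 (mulr_ge0 M_ge0 M1_ge0)); nra.
have coef_v : M * (M - 1) + (M - 1) ^+ 2 + 1 <= M ^+ 4.
  have : 0 <= M ^+ 3 + M ^+ 2 - M + 2 by nra.
  by move/(mulr_ge0 M1_ge0); nra.
have uv_ge0 : 0 <= (M - 1) * (u ^+ 2 + v ^+ 2).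
  by rewrite mulr_ge0 // addr_ge0 // sqr_ge0.
have := ler_wpM2l a_ge0 (mul2_le_sqr_sum u v b_le).
have := ler_wpM2r uv_ge0 a_le.
have := ler_wpM2r (sqr_ge0 u) coef_u.
have := ler_wpM2r (sqr_ge0 v) coef_v.
have a2_le : a ^+ 2 <= M ^+ 2 by nra.
have := ler_wpM2r (sqr_ge0 u) a2_le.
have := ler_wpM2r (sqr_ge0 v) (sqr_le_of_norm_le b_le).
nra.
Qed.

Lemma shear_sqr_norm_ge (M a b u v : R) :
  1 <= M -> M^-1 <= a <= M -> `|b| <= M - 1 ->
  u ^+ 2 + v ^+ 2 <= M ^+ 4 * ((a * u + b * v) ^+ 2 + v ^+ 2).
Proof.
move=> M_ge1 /andP[+ a_le] b_le; rewrite invf_le_mul_ge1 ?(lt_le_trans ltr01) // => aM_ge1.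
set p := a * u + b * v.
have M_ge0 : 0 <= M by lra.
have M1_ge0 : 0 <= M - 1 by lra.
have au_le : (a * u) ^+ 2 <= M * p ^+ 2 + M * (M - 1) * v ^+ 2.
  have -> : a * u = p - b * v by rewrite /p; ring.
  have Nb_le : `|- b| <= M - 1 by rewrite normrN.
  have := mul2_le_sqr_sum p v Nb_le.
  have := ler_wpM2r (sqr_ge0 v) (sqr_le_of_norm_le b_le).
  nra.
have u_le : u ^+ 2 <= M ^+ 2 * (a * u) ^+ 2.
  have aM2_ge1 : 1 <= (a * M) ^+ 2 by nra.
  have := ler_wpM2r (sqr_ge0 u) aM2_ge1.
  nra.
have := ler_wpM2l (sqr_ge0 M) au_le.
have M3_ge1 : 1 <= M ^+ 3 by rewrite exprn_ege1.
have M4_ge : M ^+ 3 <= M ^+ 4 by rewrite [leRHS]exprS ler_peMl // exprn_ge0.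
have := ler_wpM2r (sqr_ge0 p) M4_ge.
have := ler_wpM2r (sqr_ge0 v) M3_ge1.
nra.
Qed.
End RealFieldFacts.

Lemma sqrt_le_mul_sqrt (R : rcfType) (a b c : R) :
  0 <= c -> a <= c ^+ 2 * b -> Num.sqrt a <= c * Num.sqrt b.
Proof.
move=> c_ge0 ab.
by rewrite -(ger0_norm c_ge0) -sqrtr_sqr -sqrtrM ?sqr_ge0 // ler_wsqrtr.
Qed.

Section Continuity.
Context {K : numFieldType} {V W : normedModType K}.

Lemma lipschitz_continuous (k : K) (f : V -> W) : 0 <= k ->
  (forall x y, `|f x - f y| <= k * `|x - y|) -> continuous f.
Proof.
move=> k_ge0 f_lip x; apply/cvgrPdist_lt => e e_gt0.
have k1_gt0 : 0 < k + 1 by rewrite ltr_wpDl.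
have d_gt0 : 0 < (k + 1)^-1 * e by rewrite mulr_gt0 ?invr_gt0.
have near_x : \forall y \near x, `|x - y| < (k + 1)^-1 * e.
  by apply: cvgr_dist_lt.
apply: filterS near_x => y; rewrite ltr_pdivlMl // => xy_lt.
apply: le_lt_trans (f_lip x y) _; apply: le_lt_trans xy_lt.
by rewrite ler_wpM2r // lerDl.
Qed.
End Continuity.

Section RealLine.
Context {R : realType}.

Lemma derivable1_continuous (f : R -> R) :
  (forall x, derivable f x 1) -> continuous f.
Proof. by move=> df x; apply/differentiable_continuous/derivable1_diffP. Qed.

Lemma mean_value_derive1 (f : R -> R) : (forall x, derivable f x 1) ->
  forall a b, exists c, f b - f a = derive1 f c * (b - a).
Proof.
move=> df.
suff mvt_le a b : a <= b -> exists c, f b - f a = derive1 f c * (b - a).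
  move=> a b; have [/mvt_le //|/ltW/mvt_le[c fc]] := leP a b.
  by exists c; rewrite -opprB fc -mulrN opprB.
move=> ab; have f_cont := derivable1_continuous df.
have [c _ fc] := MVT_segment ab (fun x _ => derivableP (df x))
  (continuous_subspaceT f_cont).
by exists c; rewrite fc derive1E.
Qed.

Lemma diffeo_derivable (f : R -> R) : diffeo f -> forall x, derivable f x 1.
Proof. by case. Qed.

Lemma diffeo_continuous (f : R -> R) : diffeo f -> continuous f.
Proof. by move/diffeo_derivable/derivable1_continuous. Qed.

End RealLine.

Definition interp (R : pzRingType) (f0 f1 : R -> R) (y x : R) : R :=
  (1 - y) * f0 x + y * f1 x.

Definition interp_map (R : pzRingType) (f0 f1 : R -> R) (p : R * R) : R * R :=
  (interp f0 f1 p.2 p.1, p.2).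

(* Heights are clamped to [0, 1], where every slice [interp f0 f1 y] is a
   bijection of R; this makes the inverse total and Lipschitz on the whole plane. *)
Definition interp_map_inv (R : realType) (f0 f1 : R -> R) (p : R * R) : R * R :=
  (xget 0 [set x | interp f0 f1 (clamp01 p.2) x = p.1], p.2).

Section InterpolationMap.
Context {R : realType} {M : R} {f0 f1 : R -> R}.
Hypotheses (M_ge1 : 1 <= M) (f0_diffeo : diffeo f0) (f1_diffeo : diffeo f1)
  (f0'_bound : forall x, M^-1 <= derive1 f0 x <= M)
  (f1'_bound : forall x, M^-1 <= derive1 f1 x <= M)
  (f0_f1_close : forall x, `|f0 x - f1 x| <= M - 1).

Local Notation g := (interp f0 f1).
Local Notation F := (interp_map f0 f1).
Local Notation G := (interp_map_inv f0 f1).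

Let M_gt0 : 0 < M := lt_le_trans ltr01 M_ge1.

Lemma interp_increment y a b : 0 <= y <= 1 ->
  exists2 s, M^-1 <= s <= M & g y b - g y a = s * (b - a).
Proof.
move=> y01.
have [c0 e0] := mean_value_derive1 (diffeo_derivable f0_diffeo) a b.
have [c1 e1] := mean_value_derive1 (diffeo_derivable f1_diffeo) a b.
exists ((1 - y) * derive1 f0 c0 + y * derive1 f1 c1).
  exact: convex_comb_itv y01 (f0'_bound c0) (f1'_bound c1).
have -> : g y b - g y a = (1 - y) * (f0 b - f0 a) + y * (f1 b - f1 a).
  by rewrite /interp; ring.
by rewrite e0 e1; ring.
Qed.

Lemma interp_dist_le y a b : 0 <= y <= 1 -> `|b - a| <= M * `|g y b - g y a|.
Proof.
move=> /(interp_increment a b)[s /andP[+ _] ->].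
rewrite invf_le_mul_ge1 // => sM_ge1.
have s_ge0 : 0 <= s by move: M_gt0; nra.
by rewrite normrM (ger0_norm s_ge0) mulrA ler_peMl // mulrC.
Qed.

Lemma interp_inj y : 0 <= y <= 1 -> injective (g y).
Proof.
move=> y01 a b gab; apply/eqP; rewrite eq_sym -subr_eq0 -normr_le0.
by have := interp_dist_le a b y01; rewrite gab subrr normr0 mulr0.
Qed.

Lemma continuous_interp y : continuous (g y).
Proof.
by move=> x; apply: cvgD; apply: cvgM; by [apply: cvg_cst | apply: diffeo_continuous].
Qed.

Lemma interp_surj y p : 0 <= y <= 1 -> exists x, g y x = p.
Proof.
move=> y01; set d := `|p - g y 0|.
have d_ge0 : 0 <= d := normr_ge0 _.
have p_le : p - g y 0 <= d := ler_norm _.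
have p_ge : g y 0 - p <= d by rewrite /d distrC ler_norm.
have [s /andP[+ _] e_hi] := interp_increment 0 (M * d) y01.
have [r /andP[+ _] e_lo] := interp_increment 0 (- (M * d)) y01.
rewrite !invf_le_mul_ge1 // => rM_ge1 sM_ge1.
have Md_ge0 : 0 <= M * d by rewrite mulr_ge0 // ltW.
have lo : g y (- (M * d)) <= p by move: e_lo; rewrite subr0; nra.
have hi : p <= g y (M * d) by move: e_hi; rewrite subr0; nra.
have Md_le : - (M * d) <= M * d by lra.
have p_itv : Num.min (g y (- (M * d))) (g y (M * d)) <= p
             <= Num.max (g y (- (M * d))) (g y (M * d)).
  by rewrite ge_min le_max lo hi orbT.
have [x _ gx] := IVT Md_le (continuous_subspaceT (@continuous_interp y)) p_itv.
by exists x.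
Qed.

Lemma interp_map_invP p : g (clamp01 p.2) (G p).1 = p.1.
Proof. exact: (xgetPex 0 (interp_surj p.1 (clamp01_itv p.2))). Qed.

Lemma interp_mapK z : cstrip z -> G (F z) = z.
Proof.
case: z => x y /= y01; congr (_, _); apply: (interp_inj y01).
by have := interp_map_invP (F (x, y)); rewrite /= clamp01_id.
Qed.

Lemma interp_map_invK z : cstrip z -> F (G z) = z.
Proof.
case: z => x y /= y01; congr (_, _).
by have := interp_map_invP (x, y); rewrite /= clamp01_id.
Qed.

Lemma continuous_interp_map : continuous F.
Proof.
move=> z; apply: (cvg_pair (G := nbhs (g z.2 z.1)) (H := nbhs z.2)); last first.
  exact: cvg_snd.
have f0_cvg : (f0 \o fst) @ z --> f0 z.1.
  by apply: cvg_comp; [exact: cvg_fst | exact: diffeo_continuous].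
have f1_cvg : (f1 \o fst) @ z --> f1 z.1.
  by apply: cvg_comp; [exact: cvg_fst | exact: diffeo_continuous].
have y_cvg : snd @ z --> z.2 by exact: cvg_snd.
apply: cvgD; apply: cvgM => //; apply: cvgB => //; exact: cvg_cst.
Qed.

Lemma interp_map_inv_lipschitz w z : `|(G w).1 - (G z).1| <= M ^+ 2 * `|w - z|.
Proof.
set x' := (G w).1; set x := (G z).1; set cw := clamp01 w.2; set cz := clamp01 z.2.
have d1 : `|w.1 - z.1| <= `|w - z| by rewrite prod_normE le_max lexx.
have d2 : `|cw - cz| <= `|w - z|.
  by apply: le_trans (clamp01_dist_le _ _) _; rewrite prod_normE le_max lexx orbT.
have shift : w.1 - g cw x = (w.1 - z.1) + (cw - cz) * (f0 x - f1 x).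
  by rewrite -(interp_map_invP z) -/x -/cz /interp; ring.
have step : `|w.1 - g cw x| <= M * `|w - z|.
  rewrite shift; apply: le_trans (ler_normD _ _) _; rewrite normrM.
  have := f0_f1_close x; have := normr_ge0 (cw - cz); have := normr_ge0 (f0 x - f1 x).
  by move: M_ge1 d1 d2; nra.
have := interp_dist_le x x' (clamp01_itv w.2); rewrite interp_map_invP => lip.
by apply: le_trans lip _; rewrite expr2 -mulrA ler_wpM2l // ltW.
Qed.

Lemma continuous_interp_map_inv : continuous G.
Proof.
have G1_cont : continuous (fun p => (G p).1).
  apply: (lipschitz_continuous (k := M ^+ 2)); first exact: exprn_ge0 (ltW M_gt0).
  exact: interp_map_inv_lipschitz.
move=> z; change ((fun p => ((G p).1, p.2)) @ z --> ((G z).1, z.2)).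
by apply: (cvg_pair (G := nbhs (G z).1) (H := nbhs z.2)); [exact: G1_cont | exact: cvg_snd].
Qed.

Lemma interp_map_dist w z : cstrip z ->
  dist2 (F w) (F z) <= M ^+ 2 * dist2 w z /\ dist2 w z <= M ^+ 2 * dist2 (F w) (F z).
Proof.
move=> z01; have [s s_itv e] := interp_increment z.1 w.1 z01.
have b_le : `|f1 w.1 - f0 w.1| <= M - 1 by rewrite distrC.
have M2_ge0 : 0 <= M ^+ 2 := sqr_ge0 M.
rewrite /dist2 /=.
have -> : g w.2 w.1 - g z.2 z.1 = s * (w.1 - z.1) + (f1 w.1 - f0 w.1) * (w.2 - z.2).
  by rewrite -e /interp; ring.
split; apply: sqrt_le_mul_sqrt; rewrite // -exprM.
- exact: shear_sqr_norm_le.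
- exact: shear_sqr_norm_ge.
Qed.

Lemma interp_map_dil_le z : cstrip z -> metric_dil_le F z (M ^+ 4).
Proof.
move=> z01 e e_gt0; exists 1 => // r _ w1 w2 w1z w2z.
have [+ _] := interp_map_dist w1 z01; have [_ +] := interp_map_dist w2 z01.
rewrite w1z w2z; set D1 := dist2 (F w1) (F z); set D2 := dist2 (F w2) (F z).
have D2_ge0 : 0 <= D2 := sqrtr_ge0 _.
have M2_ge0 : 0 <= M ^+ 2 := sqr_ge0 M.
move=> /(ler_wpM2l M2_ge0); rewrite mulrA -exprD => r_le D1_le.
have := mulr_ge0 (ltW e_gt0) D2_ge0; lra.
Qed.

Lemma interp_map_qc : qc_strip (M ^+ 4) F.
Proof.
have strip_cstrip z : strip z -> cstrip z.
  by case/andP => *; apply/andP; split; apply: ltW.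
split.
- split => //; first exact: continuous_subspaceT continuous_interp_map.
  exists G; split => //; first exact: continuous_subspaceT continuous_interp_map_inv.
  + by move=> z /strip_cstrip /interp_mapK.
  + by move=> z /strip_cstrip /interp_map_invK.
- by move=> z /strip_cstrip /interp_map_dil_le dil; exists (M ^+ 4 + 1); apply: dil.
- by apply: aeW => z /strip_cstrip /interp_map_dil_le.
Qed.

Lemma interp_map_boundary x : F (x, 0) = (f0 x, 0) /\ F (x, 1) = (f1 x, 1).
Proof. by rewrite /interp_map /interp /= subr0 subrr !(mul1r, mul0r, addr0, add0r). Qed.

End InterpolationMap.

Theorem lemma1 (R : realType) :
  exists K : R -> R,
    [/\ (forall M : R, 1 <= M -> 1 <= K M),
        K x @[x --> (1:R)^'+] --> (1:R) &
        forall M : R, 1 <= M ->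
        forall f0 f1 : R -> R,
          diffeo f0 -> diffeo f1 ->
          (forall x, M^-1 <= derive1 f0 x <= M) ->
          (forall x, M^-1 <= derive1 f1 x <= M) ->
          (forall x, `|f0 x - f1 x| <= M - 1) ->
          exists F : R * R -> R * R,
            [/\ qc_strip (K M) F,
                {within (@cstrip R), continuous F} &
                forall x : R, F (x, 0) = (f0 x, 0) /\ F (x, 1) = (f1 x, 1)]].
Proof.
exists (fun M => M ^+ 4); split.
- by move=> M M_ge1; rewrite exprn_ege1.
- apply: cvg_at_right_filter; rewrite -[X in _ --> X](expr1n R 4).
  exact: exprn_continuous.
move=> M M_ge1 f0 f1 f0_diffeo f1_diffeo f0'_bound f1'_bound f0_f1_close.
exists (interp_map f0 f1); split.
- exact: interp_map_qc.
- exact/continuous_subspaceT/continuous_interp_map.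
- exact: interp_map_boundary.
Qed.
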